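(* Fix a positive integer $n$ and two partitions $\Lambda_w$ and $\Lambda_b$ of $n$. Then $$\sum_{T\in\mathbf{W}_{\Lambda_w,\Lambda_b}}\varepsilon(T)-\sum_{T\in\mathbf{B}_{\Lambda_w,\Lambda_b}}\varepsilon(T)=\sum_{T\in\mathbf{W}_{\Lambda_w,\Lambda_b}}\omega(T)-\sum_{T\in\mathbf{B}_{\Lambda_w,\Lambda_b}}\omega(T).$$
   Context: A black and white tree is a finite tree embedded in $\mathbb{C}$ whose vertices are colored black and white so that adjacent vertices have different colors. It is real if it is invariant (including colors) under complex conjugation. Two real trees are isomorphic if one is carried to the other by a homeomorphism of $\mathbb{C}$ commuting with complex conjugation and preserving the orientation of the real axis (and the colors); trees are considered up to isomorphism. The real vertices of a real tree $T$ are its vertices on $\mathbb{R}$; the real part sequence of $T$ is the sequence of (color, degree) of the real vertices from left to right; the first and last real vertices are the border vertices. A disorder of $T$ is a pair of real vertices of the same color such that the left one has strictly greater degree than the right one; $\varepsilon(T)=(-1)^d$ with $d$ the number of disorders. The weight $\omega(T)$: if the real part sequence is not symmetric (not a palindrome), $\omega(T)=0$; if $T$ has only one real vertex, $\omega(T)=1$; if the real part sequence is symmetric, $T$ has more than one real vertex and the middle real vertex has the same color as the border vertices, $\omega(T)=-1$; if it is symmetric, with more than one real vertex, and the middle real vertex has a different color from the border vertices, $\omega(T)=1$. $T$ is white side (resp. black side) if its rightmost real vertex is white (resp. black). $\mathbf{W}_{\Lambda_w,\Lambda_b}$ (resp. $\mathbf{B}_{\Lambda_w,\Lambda_b}$)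 is the set of isomorphism classes of white side (resp. black side) real trees with white vertex degrees $\Lambda_w$ and black vertex degrees $\Lambda_b$. *)

From HB Require Import structures.
From mathcomp Require Import all_boot all_order all_algebra.
Set Implicit Arguments. Unset Strict Implicit. Unset Printing Implicit Defensive.
Import GRing.Theory Num.Theory.

(* Plane (ordered, rooted) trees.  A real tree is encoded by its real   *)
(* vertices (a path on R, left to right) together with, for each real   *)
(* vertex, the ordered list (counterclockwise, from the right real      *)
(* direction to the left one) of plane trees hanging in the upper half  *)
(* plane; the lower half plane part is the mirror image.  Up to         *)
(* isomorphism (homeomorphism of C commuting with conjugation and       *)
(* preserving the orientation of R and the colours) this encoding is    *)
(* a bijection onto the real trees.                                      *)

Inductive ptree := PNode of seq ptree.

Fixpoint ptree_enc (t : ptree) : GenTree.tree unit :=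
  let: PNode ts := t in GenTree.Node 0 (map ptree_enc ts).

Fixpoint ptree_dec (g : GenTree.tree unit) : ptree :=
  match g with
  | GenTree.Leaf _ => PNode [::]
  | GenTree.Node _ gs => PNode (map ptree_dec gs)
  end.

Fixpoint ptree_encK_aux (t : ptree) : ptree_dec (ptree_enc t) = t :=
  match t return ptree_dec (ptree_enc t) = t with
  | PNode ts =>
    f_equal PNode
      ((fix aux (l : seq ptree) : map ptree_dec (map ptree_enc l) = l :=
          match l return map ptree_dec (map ptree_enc l) = l with
          | [::] => erefl
          | t :: l' => f_equal2 cons (ptree_encK_aux t) (aux l')
          end) ts)
  end.

Lemma ptree_encK : cancel ptree_enc ptree_dec.
Proof. exact: ptree_encK_aux. Qed.

HB.instance Definition _ := Countable.copy ptree (can_type ptree_encK).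

(* Colours: true = white, false = black. *)

(* (colour, degree) of the vertices of an upper tree t whose root has    *)
(* colour c (the root is joined to its parent by one edge).             *)
Fixpoint up_verts (c : bool) (t : ptree) : seq (bool * nat) :=
  let: PNode ts := t in
  (c, (size ts).+1) :: flatten (map (up_verts (~~ c)) ts).

(* A real tree: (colour of the leftmost real vertex,
                 upper forests of the real vertices from left to right). *)
Definition rtree := (bool * seq (seq ptree))%type.

Definition valid_rtree (T : rtree) : bool := 0 < size T.2.

Definition nreal (T : rtree) : nat := size T.2.

Definition real_col (T : rtree) (i : nat) : bool := T.1 (+) odd i.

Definition real_deg (T : rtree) (i : nat) : nat :=
  (0 < i) + (i.+1 < nreal T) + 2 * size (nth [::] T.2 i).

Definition real_part (T : rtree) : seq (bool * nat) :=
  [seq (real_col T i, real_deg T i) | i <- iota 0 (nreal T)].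

(* all (colour, degree) of the non-real vertices; each upper vertex      *)
(* appears together with its complex conjugate                            *)
Definition nonreal_verts (T : rtree) : seq (bool * nat) :=
  let up := flatten [seq flatten (map (up_verts (~~ real_col T i))
                                      (nth [::] T.2 i))
                    | i <- iota 0 (nreal T)] in
  up ++ up.

Definition all_verts (T : rtree) : seq (bool * nat) :=
  real_part T ++ nonreal_verts T.

Definition degs_of (col : bool) (T : rtree) : seq nat :=
  [seq v.2 | v <- all_verts T & v.1 == col].

Definition white_side (T : rtree) : bool := real_col T (nreal T).-1.

Definition is_partition (n : nat) (l : seq nat) : bool :=
  [&& sorted geq l, all (fun x => 0 < x) l & sumn l == n].

Definition inW (Lw Lb : seq nat) (T : rtree) : bool :=
  [&& valid_rtree T, white_side T,
      perm_eq (degs_of true T) Lw & perm_eq (degs_of false T) Lb].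

Definition inB (Lw Lb : seq nat) (T : rtree) : bool :=
  [&& valid_rtree T, ~~ white_side T,
      perm_eq (degs_of true T) Lw & perm_eq (degs_of false T) Lb].

Definition enumerates (s : seq rtree) (P : rtree -> bool) : Prop :=
  uniq s /\ forall T, (T \in s) = P T.

Definition disorders (T : rtree) : nat :=
  let s := real_part T in
  \sum_(0 <= i < size s) \sum_(i.+1 <= j < size s)
     (((nth (false, 0) s i).1 == (nth (false, 0) s j).1)
      && ((nth (false, 0) s j).2 < (nth (false, 0) s i).2)).

Local Open Scope ring_scope.
Definition eps (T : rtree) : int := (-1) ^+ disorders T.

Definition omega (T : rtree) : int :=
  let s := real_part T in
  if rev s != s then 0
  else if (nreal T == 1)%N then 1
  else if real_col T (nreal T)./2 == real_col T 0 then -1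
  else 1.

(* Weight each real tree T by its side sign sigma(T) (+1 if white side, -1 if
   black side), so that the claim reads sum sigma*eps = sum sigma*omega over a set
   of trees closed under every rearrangement of the real vertices that keeps each
   vertex's colour, border status and hanging forest.

   A first sign-reversing involution acts at the borders.  When the two border
   vertices have different colours it complements the colouring and exchanges the
   border forests and each adjacent pair of inner forests, so that every forest
   keeps its colour; when they have the same colour but different degrees it
   exchanges their forests.  Its fixed points are the one-vertex trees, where
   eps = omega = 1, and the twin trees, whose border vertices agree in colour and
   degree; these are also the only other trees with omega <> 0, since a
   palindromic real part has equal ends.

   On a twin tree with m inner vertices, eps is (-1)^(m/2) times the sign of the
   disorders among the inner vertices.  A second involution exchanges two
   same-coloured inner vertices of different degrees in the first block of four
   (or the final block of three) where this is possible, which flips that sign.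
   Its fixed points have an even number of inner disorders, and palify maps them
   bijectively onto the twin trees with palindromic real part, on which
   omega = (-1)^(m/2). *)

From mathcomp Require Import all_boot all_order all_algebra.
From mathcomp Require Import zify ring.
Set Implicit Arguments. Unset Strict Implicit. Unset Printing Implicit Defensive.
Import GRing.Theory Num.Theory.

Section SumsOverStableSeq.
Variables (T : eqType) (s : seq T).
Hypothesis s_uniq : uniq s.

Lemma reindex_inj_seq (R : Type) (idx : R) (op : Monoid.com_law idx)
    (h : T -> T) (P : pred T) (F : T -> R) :
  injective h -> {in s, forall x, h x \in s} ->
  \big[op/idx]_(x <- s | P x) F x = \big[op/idx]_(x <- s | P (h x)) F (h x).
Proof.
move=> h_inj s_h.
have hs_uniq : uniq (map h s) by rewrite map_inj_uniq.
have hs_sub : {subset map h s <= s} by move=> _ /mapP[x xs ->]; exact: s_h.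
have hs_s : perm_eq (map h s) s.
  by apply: uniq_perm => //; apply: (uniq_min_size hs_uniq hs_sub _).2; rewrite size_map.
by rewrite -[LHS](perm_big _ hs_s) big_map.
Qed.

Local Open Scope ring_scope.

Lemma sum_involution (R : numDomainType) (J : T -> T) (w : T -> R) :
  involutive J -> {in s, forall x, J x \in s} ->
  {in s, forall x, J x != x -> w (J x) = - w x} ->
  \sum_(x <- s) w x = \sum_(x <- s | J x == x) w x.
Proof.
move=> JK s_J w_J; rewrite (bigID (fun x => J x == x)) /= -[RHS]addr0.
congr (_ + _); set moved := (X in X = 0).
have moved_opp : moved = - moved.
  rewrite {1}/moved (reindex_inj_seq _ _ _ (inv_inj JK) s_J) -sumrN.
  rewrite big_seq_cond [RHS]big_seq_cond; apply: eq_big => [x|x /andP[xs Jx]].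
    by rewrite JK eq_sym.
  by move: Jx; rewrite JK eq_sym; exact: w_J.
by have := mulrn_eq0 moved 2; rewrite mulr2n {1}moved_opp addNr eqxx => /esym/eqP.
Qed.

End SumsOverStableSeq.

Section SeqInduction.
Variables (Y : Type) (P : seq Y -> Prop).

Lemma seq_ind2 : P [::] -> (forall x, P [:: x]) ->
  (forall x y r, P r -> P [:: x, y & r]) -> forall l, P l.
Proof.
move=> P0 P1 P2 l; elim: {l}(size l) {-2}l (leqnn (size l)) => [|n IH].
  by case.
by case=> [|x [|y r]] //= r_size; apply: P2; apply: IH; lia.
Qed.

Lemma seq_ind4 : P [::] -> (forall x, P [:: x]) -> (forall x y, P [:: x; y]) ->
  (forall x y z, P [:: x; y; z]) ->
  (forall x y z t r, P r -> P [:: x, y, z, t & r]) -> forall l, P l.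
Proof.
move=> P0 P1 P2 P3 P4 l; elim: {l}(size l) {-2}l (leqnn (size l)) => [|n IH].
  by case.
by case=> [|x [|y [|z [|t r]]]] //= r_size; apply: P4; apply: IH; lia.
Qed.

End SeqInduction.

Definition palindrome (Y : eqType) (s : seq Y) : bool := rev s == s.

Lemma palindrome_cons_rcons (Y : eqType) (x y : Y) m :
  palindrome (x :: rcons m y) = (x == y) && palindrome m.
Proof.
rewrite /palindrome rev_cons rev_rcons rcons_cons eqseq_cons eqseq_rcons eq_sym.
by case: (x == y); rewrite ?andbT ?andbF.
Qed.

Lemma perm_swap2 (Y : eqType) (x y : Y) : perm_eq [:: x; y] [:: y; x].
Proof. by apply/permP => p /=; rewrite addnCA. Qed.

Lemma perm_cons_rcons (Y : eqType) (x y x' y' : Y) m m' :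
  perm_eq [:: x; y] [:: x'; y'] -> perm_eq m m' ->
  perm_eq (x :: rcons m y) (x' :: rcons m' y').
Proof.
move=> /permP ends /permP mm'; apply/permP => p; move: (ends p).
by rewrite /= -!cats1 !count_cat mm' /=; lia.
Qed.

(** * Disorders of coloured sequences *)

Definition disorder (x y : bool * nat) : bool := (x.1 == y.1) && (y.2 < x.2).

Lemma disorderxx x : disorder x x = false.
Proof. by rewrite /disorder ltnn andbF. Qed.

Lemma disorderN c c' k k' : c' = ~~ c -> disorder (c, k) (c', k') = false.
Proof. by move=> ->; rewrite /disorder; case: c. Qed.

Lemma disorder_pair x y :
  disorder x y + disorder y x = (x.1 == y.1) && (x.2 != y.2).
Proof. by rewrite /disorder [y.1 == _]eq_sym neq_ltn; case: (x.1 == y.1); case: ltngtP. Qed.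

Fixpoint ndisorders (s : seq (bool * nat)) : nat :=
  if s is x :: r then count (disorder x) r + ndisorders r else 0.

Lemma ndisorders_cons x s : ndisorders (x :: s) = count (disorder x) s + ndisorders s.
Proof. by []. Qed.

Lemma ndisordersE s : ndisorders s =
  \sum_(0 <= i < size s) \sum_(i.+1 <= j < size s)
     disorder (nth (false, 0) s i) (nth (false, 0) s j).
Proof.
elim: s => [|x s IH] /=; first by rewrite big_geq.
rewrite big_ltn // big_add1 /= IH; congr (_ + _).
  by rewrite -sumn_count sumnE big_map (big_nth (false, 0)).
by rewrite [RHS]big_add1 /=; apply: eq_bigr => i _; rewrite [RHS]big_add1.
Qed.

Lemma disordersE T : disorders T = ndisorders (real_part T).
Proof. by rewrite ndisordersE. Qed.

Lemma odd_sum_eq m n (b : bool) k : m + n = b + 2 * k -> odd m = b (+) odd n.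
Proof.
move/(congr1 odd); rewrite !oddD.
by case: b; case: (odd k); case: (odd m); case: (odd n).
Qed.

Lemma ndisorders_cat a s : ndisorders (a ++ s) =
  ndisorders a + ndisorders s + \sum_(x <- a) count (disorder x) s.
Proof.
elim: a => [|x a IH] /=; first by rewrite big_nil addn0.
by rewrite big_cons count_cat IH; lia.
Qed.

Lemma ndisorders_rcons s y :
  ndisorders (rcons s y) = ndisorders s + count (disorder^~ y) s.
Proof. by elim: s => [|x s IH] //=; rewrite IH -cats1 count_cat /=; lia. Qed.

Lemma ndisorders_border x s y : ndisorders (x :: rcons s y) =
  count (disorder x) s + disorder x y + ndisorders s + count (disorder^~ y) s.
Proof. by rewrite /= ndisorders_rcons -cats1 count_cat /=; lia. Qed.

Lemma ndisorders_perm_suffix a s t : perm_eq s t ->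
  ndisorders (a ++ s) + ndisorders t = ndisorders (a ++ t) + ndisorders s.
Proof.
move/permP=> st; rewrite !ndisorders_cat.
by rewrite (eq_bigr (fun x => count (disorder x) t)) => [|x _]; [lia | exact: st].
Qed.

Lemma odd_ndisorders_perm_suffix a s t : perm_eq s t ->
  odd (ndisorders (a ++ s)) =
  odd (ndisorders (a ++ t)) (+) odd (ndisorders s) (+) odd (ndisorders t).
Proof.
move/(ndisorders_perm_suffix a)/(congr1 odd); rewrite !oddD.
by move: (odd _) (odd _) (odd _) (odd _); do !case.
Qed.

Lemma ndisorders_swap12 a b s :
  a.1 != b.1 -> ndisorders [:: b, a & s] = ndisorders [:: a, b & s].
Proof.
by move=> ab; rewrite /= {1 4}/disorder (negbTE ab) eq_sym (negbTE ab); lia.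
Qed.

Lemma ndisorders_swap13 a b c s : a.1 = c.1 -> b.1 != a.1 -> a.2 != c.2 ->
  odd (ndisorders [:: c, b, a & s]) = ~~ odd (ndisorders [:: a, b, c & s]).
Proof.
case: a c => [ca a2] [_ c2] /= <- ba ac; apply: (@odd_sum_eq _ _ true
  (count (disorder (ca, a2)) s + count (disorder b) s
   + count (disorder (ca, c2)) s + ndisorders s)).
rewrite /= /disorder /= eqxx (negbTE ba) [ca == _]eq_sym (negbTE ba) /=.
by move: ac; case: ltngtP; lia.
Qed.

Lemma ndisorders_swap24 a b c d s : b.1 = d.1 -> c.1 != b.1 -> b.2 != d.2 ->
  odd (ndisorders [:: a, d, c, b & s]) = ~~ odd (ndisorders [:: a, b, c, d & s]).
Proof.
move=> bd1 cb bd2; rewrite ndisorders_cons [in RHS]ndisorders_cons oddD [in RHS]oddD.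
rewrite ndisorders_swap13 // addbN.
by congr (~~ (odd _ (+) _)); rewrite /=; ring.
Qed.

(* Degrees in s are even and x's is odd, so no element of s ties with x. *)
Lemma count_disorder_around x s : odd x.2 -> all (fun z => ~~ odd z.2) s ->
  count (disorder x) s + count (disorder^~ x) s = count (fun z => z.1 == x.1) s.
Proof.
move=> x_odd; elim: s => //= z s IH /andP[z_even s_even]; rewrite -IH //.
have zx : z.2 != x.2 by apply: contraNneq z_even => ->.
by rewrite /disorder eq_sym; case: (z.1 == x.1); move: zx; case: ltngtP; lia.
Qed.

Lemma ndisorders_swap_ends x y s s' :
  odd x.2 -> odd y.2 -> all (fun z => ~~ odd z.2) s ->
  perm_eq s s' -> ndisorders s' = ndisorders s ->
  ndisorders (x :: rcons s y) + ndisorders (y :: rcons s' x) =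
  (x.1 == y.1) && (x.2 != y.2) + count (fun z => z.1 == x.1) s
  + count (fun z => z.1 == y.1) s + 2 * ndisorders s.
Proof.
move=> x_odd y_odd s_even /permP ss' Ds'; rewrite !ndisorders_border Ds' -!ss'.
rewrite -(count_disorder_around x_odd) // -(count_disorder_around y_odd) //.
by rewrite -disorder_pair; ring.
Qed.

Lemma ndisorders_twin_ends x s : odd x.2 -> all (fun z => ~~ odd z.2) s ->
  ndisorders (x :: rcons s x) = count (fun z => z.1 == x.1) s + ndisorders s.
Proof.
move=> x_odd s_even.
by rewrite ndisorders_border disorderxx -(count_disorder_around x_odd s_even) addn0; ring.
Qed.

Lemma ndisorders_swap_ends_same x y s :
  odd x.2 -> odd y.2 -> all (fun z => ~~ odd z.2) s -> x.1 = y.1 -> x.2 != y.2 ->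
  odd (ndisorders (y :: rcons s x)) = ~~ odd (ndisorders (x :: rcons s y)).
Proof.
move=> x_odd y_odd s_even xy1 xy2.
apply: (@odd_sum_eq _ _ true (count (fun z => z.1 == x.1) s + ndisorders s)).
by rewrite addnC (ndisorders_swap_ends _ _ s_even) // -xy1 eqxx xy2; ring.
Qed.

Lemma count_colours (b : bool) (s : seq (bool * nat)) :
  count (fun z => z.1 == b) s + count (fun z => z.1 == ~~ b) s = size s.
Proof. by elim: s => //= z s <-; case: b; case: z.1; lia. Qed.

Lemma ndisorders_swap_ends_diff x y s s' :
  odd x.2 -> odd y.2 -> all (fun z => ~~ odd z.2) s -> x.1 != y.1 ->
  ~~ odd (size s) -> perm_eq s s' -> ndisorders s' = ndisorders s ->
  odd (ndisorders (y :: rcons s' x)) = odd (ndisorders (x :: rcons s y)).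
Proof.
move=> x_odd y_odd s_even xy1 s_size ss' Ds'.
apply: (@odd_sum_eq _ _ false ((size s)./2 + ndisorders s)).
have y1 : y.1 = ~~ x.1 by move: xy1; case: x.1; case: y.1.
rewrite addnC (ndisorders_swap_ends _ _ s_even) // y1.
have -> : (x.1 == ~~ x.1) = false by case: (x.1).
rewrite /= add0n count_colours -{1}[size s]odd_double_half (negbTE s_size).
by rewrite -mul2n /=; ring.
Qed.

(** * Alternating sequences and their rearrangements *)

Section Alternate.
Variable Y : eqType.

Fixpoint alternate (c : bool) (l : seq Y) : seq (bool * Y) :=
  if l is x :: r then (c, x) :: alternate (~~ c) r else [::].

Lemma alternate_cons c (x : Y) l :
  alternate c (x :: l) = (c, x) :: alternate (~~ c) l.
Proof. by []. Qed.

Lemma unzip2_alternate c l : unzip2 (alternate c l) = l.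
Proof. by elim: l c => //= x l IH c; rewrite IH. Qed.

Lemma alternate_inj c : injective (alternate c).
Proof. by move=> l l' /(congr1 unzip2); rewrite !unzip2_alternate. Qed.

Lemma size_alternate c l : size (alternate c l) = size l.
Proof. by rewrite -[in RHS](unzip2_alternate c l) size_map. Qed.

Lemma alternateE (x0 : Y) c l :
  alternate c l = [seq (c (+) odd i, nth x0 l i) | i <- iota 0 (size l)].
Proof.
elim: l c => //= x l IH c; rewrite IH addbF (iotaDl 1 0) -map_comp.
by congr (_ :: _); apply: eq_map => i /=; rewrite addbN addNb.
Qed.

Lemma alternate_rcons c l y :
  alternate c (rcons l y) = rcons (alternate c l) (c (+) odd (size l), y).
Proof.
elim: l c => [|x l IH] c /=; first by rewrite addbF.
by rewrite IH addbN -addNb.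
Qed.

Lemma rev_alternate c l :
  rev (alternate c l) = alternate (c (+) ~~ odd (size l)) (rev l).
Proof.
elim: l c => //= x l IH c.
rewrite !rev_cons IH alternate_rcons size_rev.
by case: c; case: (odd (size l)).
Qed.

Lemma palindrome_alternate c l :
  odd (size l) -> palindrome (alternate c l) = palindrome l.
Proof.
by move=> l_odd; rewrite /palindrome rev_alternate l_odd addbF (inj_eq (@alternate_inj c)).
Qed.

Lemma count_alternate c d l : count (fun p => p.1 == c) (alternate d l) =
  if d == c then uphalf (size l) else (size l)./2.
Proof.
elim: l d => [|x l IH] d /=; first by case: (d == c).
by rewrite IH {IH}; case: c; case: d => /=; rewrite ?add0n ?add1n ?uphalfE.
Qed.

End Alternate.

Lemma map_alternate (Y Z : eqType) (f : Y -> Z) c l :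
  alternate c (map f l) = [seq (p.1, f p.2) | p <- alternate c l].
Proof. by elim: l c => //= x l IH c; rewrite IH. Qed.

Section SwapPairs.
Variable Y : eqType.

Fixpoint swap_pairs (l : seq Y) : seq Y :=
  if l is x :: y :: r then y :: x :: swap_pairs r else l.

Lemma swap_pairsK : involutive swap_pairs.
Proof. by elim/seq_ind2 => //= x y r ->. Qed.

Lemma perm_swap_pairs l : perm_eq (swap_pairs l) l.
Proof.
elim/seq_ind2: l => //= x y r IH.
by apply/permP => p /=; rewrite (permP IH) addnCA.
Qed.

Lemma size_swap_pairs l : size (swap_pairs l) = size l.
Proof. exact: perm_size (perm_swap_pairs l). Qed.

End SwapPairs.

Lemma map_swap_pairs (Y Z : eqType) (f : Y -> Z) l :
  map f (swap_pairs l) = swap_pairs (map f l).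
Proof. by elim/seq_ind2: l => //= x y r ->. Qed.

Lemma alternate_swap_pairs (Y : eqType) c (l : seq Y) : ~~ odd (size l) ->
  alternate c (swap_pairs l) = swap_pairs (alternate (~~ c) l).
Proof. by elim/seq_ind2: l c => //= x y r IH c; rewrite !negbK => /IH ->. Qed.

Lemma ndisorders_swap_pairs c l :
  ndisorders (swap_pairs (alternate c l)) = ndisorders (alternate c l).
Proof.
elim/seq_ind2: l c => // x y r IH c.
rewrite [alternate _ _]/= negbK [swap_pairs _]/=.
have := ndisorders_perm_suffix [:: (~~ c, y); (c, x)] (perm_swap_pairs (alternate c r)).
rewrite IH => /addIn; rewrite !cat_cons cat0s => ->.
by rewrite ndisorders_swap12 //=; case: c.
Qed.

Section Palify.
Variable Y : eqType.

Fixpoint palify (l : seq Y) : seq Y :=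
  if l is [:: x0, x1, x2, x3 & r] then x0 :: x1 :: rcons (rcons (palify r) x3) x2
  else l.

Lemma size_palify l : size (palify l) = size l.
Proof. by elim/seq_ind4: l => //= x0 x1 x2 x3 r IH; rewrite !size_rcons IH. Qed.

Lemma palify_inj : injective palify.
Proof.
move=> l l' eq_pal; have := size_palify l; rewrite eq_pal size_palify.
elim/seq_ind4: l l' eq_pal => [|x|x y|x y z|x0 x1 x2 x3 r IH];
  case=> [|? [|? [|? [|? r']]]] //=.
by case=> -> -> /rcons_inj[/rcons_inj[/IH eq_r -> ->]] [/eq_r ->].
Qed.

Lemma perm_alternate_palify c l :
  odd (size l) -> perm_eq (alternate c (palify l)) (alternate c l).
Proof.
elim/seq_ind4: l c => //= x0 x1 x2 x3 r IH c; rewrite !negbK => r_odd.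
rewrite !alternate_rcons !size_rcons size_palify /= r_odd addbT addbF.
apply/permP => p; rewrite /= -!cats1 !count_cat (permP (IH c r_odd)) /=; ring.
Qed.

End Palify.

Section DefectSwap.
Variables (X : eqType) (key : X -> nat).

Fixpoint defect_swap (l : seq X) : seq X :=
  match l with
  | [:: x0, x1, x2, x3 & r] =>
      if key x0 != key x2 then [:: x2, x1, x0, x3 & r]
      else if key x1 != key x3 then [:: x0, x3, x2, x1 & r]
      else [:: x0, x1, x2, x3 & defect_swap r]
  | [:: x0; x1; x2] => if key x0 != key x2 then [:: x2; x1; x0] else l
  | _ => l
  end.

Lemma size_defect_swap l : size (defect_swap l) = size l.
Proof.
elim/seq_ind4: l => //= [x y z|x0 x1 x2 x3 r IH]; first by case: ifP.
by case: ifP => // _; case: ifP => //= _; rewrite IH.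
Qed.

Lemma defect_swapK : involutive defect_swap.
Proof.
elim/seq_ind4 => //= [x y z|x0 x1 x2 x3 r IH].
  by case: ifP => k02 /=; rewrite ?k02 // eq_sym k02.
case: ifP => k02 /=; first by rewrite eq_sym k02.
case: ifP => k13 /=; first by rewrite k02 eq_sym k13.
by rewrite k02 k13 IH.
Qed.

Lemma perm_alternate_defect_swap c l :
  perm_eq (alternate c (defect_swap l)) (alternate c l).
Proof.
elim/seq_ind4: l c => // [x y z|x0 x1 x2 x3 r IH] c /=.
  by case: ifP => _ //; apply/permP => p /=; rewrite !negbK; ring.
case: ifP => _; first by apply/permP => p /=; rewrite !negbK; ring.
case: ifP => _; first by apply/permP => p /=; rewrite !negbK; ring.
by apply/permP => p /=; rewrite (permP (IH _)).
Qed.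

Lemma perm_keys_defect_swap c l :
  perm_eq (alternate c (map key (defect_swap l))) (alternate c (map key l)).
Proof. by rewrite !map_alternate; apply/perm_map/perm_alternate_defect_swap. Qed.

Lemma odd_ndisorders_defect_swap c l :
  odd (ndisorders (alternate c (map key (defect_swap l)))) =
  odd (ndisorders (alternate c (map key l))) (+) (defect_swap l != l).
Proof.
elim/seq_ind4: l c => [|x|x y|x y z|x0 x1 x2 x3 r IH] c;
  rewrite [defect_swap _]/= ?eqxx ?addbF //.
  case: ifP => k02; last by rewrite eqxx addbF.
  have -> : [:: z; y; x] != [:: x; y; z] by apply: contraNneq k02 => -[->].
  rewrite !map_cons !alternate_cons !negbK addbT.
  by apply: ndisorders_swap13 => //=; case: c.
case: ifP => k02.
  have -> : [:: x2, x1, x0, x3 & r] != [:: x0, x1, x2, x3 & r].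
    by apply: contraNneq k02 => -[->].
  rewrite !map_cons !alternate_cons !negbK addbT.
  by apply: ndisorders_swap13 => //=; case: c.
case: ifP => k13.
  have -> : [:: x0, x3, x2, x1 & r] != [:: x0, x1, x2, x3 & r].
    by apply: contraNneq k13 => -[->].
  rewrite !map_cons !alternate_cons !negbK addbT.
  by apply: ndisorders_swap24 => //=; case: c.
rewrite !eqseq_cons !eqxx !andTb.
set p := [:: (c, key x0); (~~ c, key x1); (c, key x2); (~~ c, key x3)].
have -> : alternate c (map key [:: x0, x1, x2, x3 & defect_swap r]) =
  p ++ alternate c (map key (defect_swap r)) by rewrite /= !negbK.
have -> : alternate c (map key [:: x0, x1, x2, x3 & r]) =
  p ++ alternate c (map key r) by rewrite /= !negbK.
rewrite (odd_ndisorders_perm_suffix _ (perm_keys_defect_swap c r)) IH.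
by case: (odd _); case: (odd _); case: (_ != _).
Qed.

End DefectSwap.

Lemma ndisorders_defect_swap_fixed (X : eqType) (key : X -> nat) c l :
  defect_swap key l = l -> ~~ odd (ndisorders (alternate c (map key l))).
Proof.
elim/seq_ind4: l c => [|x|x y|x y z|x0 x1 x2 x3 r IH] c //=.
- by rewrite disorderN.
- case: ifP => [k02 [zx _]|/negbFE/eqP k02 _]; first by rewrite zx eqxx in k02.
  by rewrite !negbK -k02 disorderxx !disorderN ?negbK.
case: ifP => [k02 [x20 _]|/negbFE/eqP k02]; first by rewrite x20 eqxx in k02.
case: ifP => [k13 [x31 _]|/negbFE/eqP k13 [/IH r_fix]]; first by rewrite x31 eqxx in k13.
rewrite !negbK -k02 -k13 !disorderxx !disorderN ?negbK // /=.
move: (r_fix c); rewrite !oddD /=.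
by move: (odd _) (odd _) (odd _); do !case.
Qed.

Lemma defect_swap_fixE (X : eqType) (key : X -> nat) l : odd (size l) ->
  (defect_swap key l == l) = palindrome (map key (palify l)).
Proof.
elim/seq_ind4: l => [|x|x y|x y z|x0 x1 x2 x3 r IH] //=; rewrite ?negbK.
- by rewrite /palindrome rev_cons /= !eqxx.
- move=> _; rewrite -[[:: key x; _; _]]/(key x :: rcons [:: key y] (key z)).
  rewrite palindrome_cons_rcons /palindrome rev_cons /= eqxx andbT.
  case: ifP => [k02|/negbFE ->]; last by rewrite eqxx.
  by rewrite (negbTE k02) eqseq_cons; apply: contraNF k02 => /andP[/eqP-> _].
move=> /IH r_fix; rewrite !map_rcons -rcons_cons !palindrome_cons_rcons -r_fix.
case: ifP => [k02|/negbFE ->].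
  by rewrite (negbTE k02) eqseq_cons; apply: contraNF k02 => /andP[/eqP-> _].
case: ifP => [k13|/negbFE ->]; last by rewrite !eqseq_cons !eqxx.
rewrite (negbTE k13) andbF !eqseq_cons eqxx /=.
by apply: contraNF k13 => /andP[/eqP-> _].
Qed.

(** * Real trees split at their border vertices *)

(* A real vertex: colour, number of real edges, forest hanging in the upper half plane. *)
Definition rvert := (bool * nat * seq ptree)%type.

Definition rvert_cd (v : rvert) : bool * nat := (v.1.1, v.1.2 + 2 * size v.2).

Definition rvert_up (v : rvert) : seq (bool * nat) :=
  flatten (map (up_verts (~~ v.1.1)) v.2).

Definition real_verts (T : rtree) : seq rvert :=
  [seq (real_col T i, (0 < i) + (i.+1 < nreal T), nth [::] T.2 i)
  | i <- iota 0 (nreal T)].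

Lemma size_real_verts T : size (real_verts T) = nreal T.
Proof. by rewrite size_map size_iota. Qed.

Lemma real_partE T : real_part T = map rvert_cd (real_verts T).
Proof. by rewrite /real_part -map_comp. Qed.

Lemma perm_degs_of col T T' : perm_eq (real_verts T) (real_verts T') ->
  perm_eq (degs_of col T) (degs_of col T').
Proof.
have all_vertsE U : all_verts U = map rvert_cd (real_verts U) ++
    flatten (map rvert_up (real_verts U)) ++ flatten (map rvert_up (real_verts U)).
  by rewrite /all_verts real_partE /real_verts -!map_comp.
move=> TT'; apply/perm_map/perm_filter; rewrite !all_vertsE.
have up_TT' := perm_flatten (perm_map rvert_up TT').
by rewrite (perm_cat (perm_map _ TT') (perm_cat up_TT' up_TT')).
Qed.

Definition inner_deg (f : seq ptree) : nat := 2 + 2 * size f.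

Definition inner_verts (c : bool) (mid : seq (seq ptree)) : seq rvert :=
  [seq (p.1, 2, p.2) | p <- alternate c mid].

Lemma real_verts_split c f0 mid fl : real_verts (c, f0 :: rcons mid fl) =
  (c, 1, f0) :: rcons (inner_verts (~~ c) mid) (c (+) ~~ odd (size mid), 1, fl).
Proof.
rewrite /real_verts /nreal /real_col /= size_rcons addbF.
have -> : iota 1 (size mid).+1 = rcons (iota 1 (size mid)) (size mid).+1.
  by rewrite -cats1 -[(size mid).+1]addn1 iotaD add1n addn1.
rewrite map_rcons; congr (_ :: rcons _ _); last first.
  by rewrite /= ltnn nth_rcons ltnn eqxx.
rewrite /inner_verts (alternateE [::]) -map_comp (iotaDl 1 0) -map_comp.
apply/eq_in_map => i; rewrite mem_iota add0n => /andP[_ i_mid] /=.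
by rewrite nth_rcons i_mid add1n !ltnS i_mid addbN addNb.
Qed.

Lemma real_part_split c f0 mid fl : real_part (c, f0 :: rcons mid fl) =
  (c, 1 + 2 * size f0)
    :: rcons (alternate (~~ c) (map inner_deg mid))
             (c (+) ~~ odd (size mid), 1 + 2 * size fl).
Proof.
rewrite real_partE real_verts_split /= map_rcons map_alternate /inner_verts.
by rewrite -map_comp.
Qed.

Lemma nreal_split c f0 mid fl : nreal (c, f0 :: rcons mid fl) = (size mid).+2.
Proof. by rewrite /nreal /= size_rcons. Qed.

Lemma white_side_split c f0 mid fl :
  white_side (c, f0 :: rcons mid fl) = c (+) ~~ odd (size mid).
Proof. by rewrite /white_side nreal_split /real_col. Qed.

Lemma all_even_inner_degs c mid :
  all (fun z => ~~ odd z.2) (alternate c (map inner_deg mid)).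
Proof.
have := all_map snd (fun d => ~~ odd d) (alternate c (map inner_deg mid)).
rewrite -/(unzip2 _) unzip2_alternate => <-.
by apply/allP => _ /mapP[f _ ->]; rewrite oddD oddM.
Qed.

Lemma epsE T : eps T = ((-1) ^+ odd (ndisorders (real_part T)))%R.
Proof. by rewrite /eps disordersE signr_odd. Qed.

Variant rtree_split_spec : rtree -> Type :=
  | RtreeSmall c fs of (size fs <= 1)%N : rtree_split_spec (c, fs)
  | RtreeSplit c f0 mid fl : rtree_split_spec (c, f0 :: rcons mid fl).

Lemma rtree_splitP T : rtree_split_spec T.
Proof.
case: T => c [|f0 [|f r]]; try exact: RtreeSmall.
by rewrite lastI; apply: RtreeSplit.
Qed.

Definition split_map
    (F : bool -> seq ptree -> seq (seq ptree) -> seq ptree -> rtree) (T : rtree) :=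
  if T is (c, f0 :: f :: r) then F c f0 (belast f r) (last f r) else T.

Lemma split_mapE F c f0 mid fl :
  split_map F (c, f0 :: rcons mid fl) = F c f0 mid fl.
Proof. by case: mid => [|m mid] //=; rewrite belast_rcons last_rcons. Qed.

Lemma split_map_small F c fs : (size fs <= 1)%N -> split_map F (c, fs) = (c, fs).
Proof. by case: fs => [|? []]. Qed.

Definition twin_borders (T : rtree) : bool :=
  (1 < nreal T)%N &&
  (nth (false, 0) (real_part T) 0 == nth (false, 0) (real_part T) (nreal T).-1).

Lemma twin_borders_split c f0 mid fl :
  twin_borders (c, f0 :: rcons mid fl) = odd (size mid) && (size f0 == size fl).
Proof.
rewrite /twin_borders nreal_split real_part_split /=.
rewrite nth_rcons size_alternate size_map ltnn eqxx xpair_eqE eqn_add2l eqn_pmul2l //.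
by case: c; case: (odd (size mid)).
Qed.

Lemma twin_borders_nreal T : twin_borders T -> (1 < nreal T)%N.
Proof. by case/andP. Qed.

Lemma omega_eq0 T : (1 < nreal T)%N -> ~~ twin_borders T -> omega T = 0%R.
Proof.
move=> T_gt1 not_twin; rewrite /omega /=; case: eqP => // pal_T.
have size_rp : size (real_part T) = nreal T by rewrite size_map size_iota.
case/negP: not_twin; rewrite /twin_borders T_gt1 -{1}pal_T nth_rev size_rp.
  by rewrite subn1 eqxx.
by lia.
Qed.

Lemma eps_omega_single T : nreal T = 1%N -> eps T = omega T.
Proof. by case: T => c [|f []] // _; rewrite /eps disordersE /omega /real_part /= eqxx. Qed.

(** * The two sign-reversing involutions *)

Definition side_sign (T : rtree) : int := if white_side T then 1%R else (-1)%R.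

Definition border_involution : rtree -> rtree := split_map (fun c f0 mid fl =>
  if ~~ odd (size mid) then (~~ c, fl :: rcons (swap_pairs mid) f0)
  else if size f0 == size fl then (c, f0 :: rcons mid fl)
  else (c, fl :: rcons mid f0)).

Lemma border_involutionK : involutive border_involution.
Proof.
move=> T; case: (rtree_splitP T) => [c fs fs_small|c f0 mid fl].
  by rewrite /border_involution !split_map_small.
rewrite /border_involution split_mapE; case: ifP => mid_even.
  by rewrite split_mapE size_swap_pairs mid_even negbK swap_pairsK.
case: eqP => [f0_fl|/eqP f0_fl]; rewrite split_mapE mid_even.
  by rewrite f0_fl eqxx.
by rewrite eq_sym (negbTE f0_fl).
Qed.

Lemma perm_border_involution T :
  perm_eq (real_verts (border_involution T)) (real_verts T).
Proof.
case: (rtree_splitP T) => [c fs fs_small|c f0 mid fl].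
  by rewrite /border_involution split_map_small.
rewrite /border_involution split_mapE; case: ifP => [mid_even|/negbFE mid_odd].
  rewrite !real_verts_split size_swap_pairs (negbTE mid_even) !addbT negbK.
  apply: perm_cons_rcons; first exact: perm_swap2.
  by rewrite /inner_verts alternate_swap_pairs // perm_map // perm_swap_pairs.
case: eqP => // _; rewrite !real_verts_split mid_odd addbF.
exact/perm_cons_rcons/perm_refl/perm_swap2.
Qed.

Lemma border_involution_fixed T :
  (border_involution T == T) = (nreal T <= 1)%N || twin_borders T.
Proof.
case: (rtree_splitP T) => [c fs fs_small|c f0 mid fl].
  by rewrite /border_involution split_map_small ?eqxx // /nreal fs_small.
rewrite /border_involution split_mapE nreal_split twin_borders_split.
case: ifP => [mid_even|/negbFE mid_odd].
  by rewrite (negbTE mid_even) xpair_eqE /=; case: c.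
rewrite mid_odd; case: (size f0 =P size fl) => [_|f0_fl]; first by rewrite !eqxx.
by apply/eqP => -[fl_f0 _]; apply: f0_fl; rewrite fl_f0.
Qed.

Lemma border_involution_sign T : border_involution T != T ->
  (side_sign (border_involution T) * eps (border_involution T) =
   - (side_sign T * eps T))%R.
Proof.
case: (rtree_splitP T) => [c fs fs_small|c f0 mid fl].
  by rewrite /border_involution split_map_small ?eqxx.
rewrite /border_involution split_mapE; case: ifP => [mid_even|/negbFE mid_odd].
  rewrite /side_sign !epsE !real_part_split !white_side_split.
  rewrite size_swap_pairs (negbTE mid_even) !addbT negbK => _.
  rewrite (@ndisorders_swap_ends_diff _ _ (alternate (~~ c) (map inner_deg mid))) //=.
  - by case: c; rewrite ?mulN1r ?mul1r ?opprK.
  - by rewrite oddD oddM.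
  - by rewrite oddD oddM.
  - exact: all_even_inner_degs.
  - by case: c.
  - by rewrite size_alternate size_map.
  - by rewrite map_swap_pairs alternate_swap_pairs ?size_map // perm_sym perm_swap_pairs.
  - by rewrite map_swap_pairs alternate_swap_pairs ?size_map // ndisorders_swap_pairs.
case: (size f0 =P size fl) => [_|f0_fl]; first by rewrite eqxx.
rewrite /side_sign !epsE !real_part_split !white_side_split mid_odd !addbF => _.
rewrite (@ndisorders_swap_ends_same _ _ (alternate (~~ c) (map inner_deg mid))) //=.
- by rewrite signrN mulrN.
- by rewrite oddD oddM.
- by rewrite oddD oddM.
- exact: all_even_inner_degs.
- by apply/eqP => sizes; apply: f0_fl; lia.
Qed.

Lemma eps_twin c f0 mid fl : odd (size mid) -> size f0 = size fl ->
  eps (c, f0 :: rcons mid fl) =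
  ((-1) ^+ ((size mid)./2 + ndisorders (alternate (~~ c) (map inner_deg mid))))%R.
Proof.
move=> mid_odd f0_fl.
rewrite /eps disordersE real_part_split mid_odd addbF -f0_fl ndisorders_twin_ends /=.
- by rewrite count_alternate size_map; case: c.
- by rewrite oddD oddM.
- exact: all_even_inner_degs.
Qed.

Lemma omega_twin c f0 mid fl : odd (size mid) -> size f0 = size fl ->
  omega (c, f0 :: rcons mid fl) =
  (if palindrome (map inner_deg mid) then (-1) ^+ (size mid)./2 else 0)%R.
Proof.
move=> mid_odd f0_fl; rewrite /omega -signr_odd real_part_split mid_odd addbF -f0_fl.
rewrite -[rev _ == _]/(palindrome _) palindrome_cons_rcons eqxx.
rewrite palindrome_alternate ?size_map //; case: (palindrome _) => //=.
by rewrite size_rcons /= nreal_split /real_col /=; case: c; case: (odd ((size mid)./2)).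
Qed.

Definition inner_involution : rtree -> rtree :=
  split_map (fun c f0 mid fl => (c, f0 :: rcons (defect_swap inner_deg mid) fl)).

Lemma inner_involutionK : involutive inner_involution.
Proof.
move=> T; case: (rtree_splitP T) => [c fs fs_small|c f0 mid fl].
  by rewrite /inner_involution !split_map_small.
by rewrite /inner_involution !split_mapE defect_swapK.
Qed.

Lemma perm_inner_involution T :
  perm_eq (real_verts (inner_involution T)) (real_verts T).
Proof.
case: (rtree_splitP T) => [c fs fs_small|c f0 mid fl].
  by rewrite /inner_involution split_map_small.
rewrite /inner_involution split_mapE !real_verts_split size_defect_swap.
exact/perm_cons_rcons/perm_map/perm_alternate_defect_swap.
Qed.

Lemma twin_borders_inner_involution T :
  twin_borders (inner_involution T) = twin_borders T.
Proof.
case: (rtree_splitP T) => [c fs fs_small|c f0 mid fl].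
  by rewrite /inner_involution split_map_small.
by rewrite /inner_involution split_mapE !twin_borders_split size_defect_swap.
Qed.

Lemma inner_involution_sign T : twin_borders T -> inner_involution T != T ->
  (side_sign (inner_involution T) * eps (inner_involution T) =
   - (side_sign T * eps T))%R.
Proof.
case: (rtree_splitP T) => [c fs fs_small|c f0 mid fl].
  by rewrite /inner_involution split_map_small ?eqxx.
rewrite twin_borders_split /inner_involution split_mapE => /andP[mid_odd /eqP f0_fl] moved.
have mid_moved : defect_swap inner_deg mid != mid by apply: contraNneq moved => ->.
rewrite /side_sign !white_side_split size_defect_swap !eps_twin ?size_defect_swap //.
rewrite -mulrN -signr_odd -[in RHS]signr_odd -signrN; congr (_ * (-1) ^+ _)%R.
by rewrite !oddD odd_ndisorders_defect_swap mid_moved addbT addbN.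
Qed.

Definition palify_rtree : rtree -> rtree := split_map (fun c f0 mid fl =>
  (c, f0 :: rcons (if odd (size mid) then palify mid else mid) fl)).

Lemma palify_rtree_inj : injective palify_rtree.
Proof.
have palify_odd_size (l : seq (seq ptree)) :
    size (if odd (size l) then palify l else l) = size l.
  by case: ifP; rewrite ?size_palify.
move=> T T'; rewrite /palify_rtree.
case: (rtree_splitP T) => [c fs fs_small|c f0 mid fl];
  case: (rtree_splitP T') => [c' fs' fs'_small|c' f0' mid' fl'].
- by rewrite !split_map_small.
- rewrite split_map_small // split_mapE => -[_ fs_eq].
  by move: fs_small; rewrite fs_eq /= size_rcons.
- rewrite split_mapE split_map_small // => -[_ fs_eq].
  by move: fs'_small; rewrite -fs_eq /= size_rcons.
rewrite !split_mapE => -[-> -> /rcons_inj[mid_eq ->]]; congr (_, _ :: rcons _ _).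
have := congr1 size mid_eq; rewrite !palify_odd_size => size_eq.
by move: mid_eq; rewrite size_eq; case: ifP => // _; apply: palify_inj.
Qed.

Lemma perm_palify_rtree T : perm_eq (real_verts (palify_rtree T)) (real_verts T).
Proof.
case: (rtree_splitP T) => [c fs fs_small|c f0 mid fl].
  by rewrite /palify_rtree split_map_small.
rewrite /palify_rtree split_mapE; case: ifP => // mid_odd.
rewrite !real_verts_split size_palify.
exact/perm_cons_rcons/perm_map/perm_alternate_palify.
Qed.

Lemma twin_borders_palify_rtree T : twin_borders (palify_rtree T) = twin_borders T.
Proof.
case: (rtree_splitP T) => [c fs fs_small|c f0 mid fl].
  by rewrite /palify_rtree split_map_small.
rewrite /palify_rtree split_mapE !twin_borders_split.
by case: ifP => mid_odd; rewrite ?size_palify ?mid_odd.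
Qed.

Lemma twin_fixed_eps_omega T : twin_borders T ->
  (if inner_involution T == T then side_sign T * eps T else 0)%R =
  (side_sign (palify_rtree T) * omega (palify_rtree T))%R.
Proof.
case: (rtree_splitP T) => [c fs fs_small|c f0 mid fl].
  by rewrite /twin_borders /nreal /=; case: fs fs_small => [|? []].
rewrite twin_borders_split => /andP[mid_odd /eqP f0_fl].
rewrite /inner_involution /palify_rtree !split_mapE mid_odd.
rewrite xpair_eqE eqxx eqseq_cons eqxx eqseq_rcons eqxx andbT /=.
rewrite /side_sign !white_side_split size_palify omega_twin ?size_palify //.
rewrite -defect_swap_fixE //; case: ifP => [/eqP mid_fixed|_]; last by rewrite mulr0.
rewrite eps_twin // -signr_odd oddD.
by rewrite (negbTE (ndisorders_defect_swap_fixed _ mid_fixed)) addbF signr_odd.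
Qed.

Section SignedSums.
Variable s : seq rtree.
(* Validity matters: the empty rtree has eps = 1 but omega = -1. *)
Hypotheses (s_uniq : uniq s) (s_valid : {in s, forall T, valid_rtree T}).
Hypothesis s_closed :
  {in s, forall T T', perm_eq (real_verts T') (real_verts T) -> T' \in s}.

Local Open Scope ring_scope.

Lemma sum_twin_eps_omega :
  \sum_(T <- s | twin_borders T) side_sign T * eps T =
  \sum_(T <- s | twin_borders T) side_sign T * omega T.
Proof.
rewrite -big_filter -[RHS]big_filter; set t := filter twin_borders s.
have t_uniq : uniq t by exact: filter_uniq.
have twin_t : {in t, forall T, twin_borders T} by move=> T; rewrite mem_filter => /andP[].
have t_closed M : (forall T, perm_eq (real_verts (M T)) (real_verts T)) ->
    (forall T, twin_borders (M T) = twin_borders T) -> {in t, forall T, M T \in t}.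
  move=> perm_M twin_M T; rewrite !mem_filter twin_M => /andP[-> T_s].
  exact: s_closed (perm_M T).
rewrite (@sum_involution _ t t_uniq _ inner_involution) //; first last.
- by move=> T /twin_t; apply: inner_involution_sign.
- exact: t_closed perm_inner_involution twin_borders_inner_involution.
- exact: inner_involutionK.
rewrite big_mkcond /=.
rewrite (eq_big_seq (fun T => side_sign (palify_rtree T) * omega (palify_rtree T))).
  rewrite [RHS](reindex_inj_seq t_uniq _ _ _ palify_rtree_inj) //.
  exact: t_closed perm_palify_rtree twin_borders_palify_rtree.
by move=> T /twin_t; apply: twin_fixed_eps_omega.
Qed.

Lemma sum_side_eps_omega :
  \sum_(T <- s) side_sign T * eps T = \sum_(T <- s) side_sign T * omega T.
Proof.
rewrite (@sum_involution _ s s_uniq _ border_involution) //; first last.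
- by move=> T _; apply: border_involution_sign.
- by move=> T /s_closed; apply; apply: perm_border_involution.
- exact: border_involutionK.
rewrite (bigID (fun T => nreal T <= 1)%N) [RHS](bigID (fun T => nreal T <= 1)%N) /=.
congr (_ + _).
  rewrite big_seq_cond [RHS]big_seq_cond.
  apply: eq_big => [T|T /andP[T_s /andP[_ small]]].
    by rewrite border_involution_fixed; case: (_ <= 1)%N; rewrite ?andbT ?andbF.
  rewrite eps_omega_single //; have := s_valid T_s.
  by move: small; rewrite /valid_rtree /nreal; lia.
rewrite [RHS](bigID twin_borders) /= [X in _ = _ + X]big1 ?addr0; last first.
  by move=> T /andP[big not_twin]; rewrite omega_eq0 ?mulr0 // ltnNge.
have twin_big T : twin_borders T -> ~~ (nreal T <= 1)%N.
  by move/twin_borders_nreal; rewrite ltnNge.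
rewrite (eq_bigl twin_borders) => [|T]; last first.
  rewrite border_involution_fixed; case: (boolP (twin_borders T)) => [/twin_big|_].
    by rewrite orbT.
  by rewrite orbF andbN.
rewrite [RHS](eq_bigl twin_borders) => [|T]; first exact: sum_twin_eps_omega.
by case: (boolP (twin_borders T)) => [/twin_big|_]; rewrite ?andbT ?andbF.
Qed.

End SignedSums.

Lemma sum_by_side (sW sB : seq rtree) (F : rtree -> int) :
  {in sW, forall T, white_side T} -> {in sB, forall T, ~~ white_side T} ->
  (\sum_(T <- sW) F T - \sum_(T <- sB) F T =
   \sum_(T <- sW ++ sB) side_sign T * F T)%R.
Proof.
move=> white black; rewrite big_cat /= -sumrN; congr (_ + _)%R.
  by apply: eq_big_seq => T /white; rewrite /side_sign => ->; rewrite mul1r.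
by apply: eq_big_seq => T /black; rewrite /side_sign => /negbTE ->; rewrite mulN1r.
Qed.

Local Open Scope ring_scope.

Theorem lemma3p12 (n : nat) (Lw Lb : seq nat) (sW sB : seq rtree) :
  (0 < n)%N -> is_partition n Lw -> is_partition n Lb ->
  enumerates sW (inW Lw Lb) -> enumerates sB (inB Lw Lb) ->
  \sum_(T <- sW) eps T - \sum_(T <- sB) eps T =
  \sum_(T <- sW) omega T - \sum_(T <- sB) omega T.
Proof.
move=> _ _ _ [uW memW] [uB memB].
have white : {in sW, forall T, white_side T} by move=> T; rewrite memW => /and4P[].
have black : {in sB, forall T, ~~ white_side T} by move=> T; rewrite memB => /and4P[].
have memS T : (T \in sW ++ sB) =
    [&& valid_rtree T, perm_eq (degs_of true T) Lw & perm_eq (degs_of false T) Lb].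
  by rewrite mem_cat memW memB /inW /inB; case: (white_side T); rewrite /= ?andbF /= ?orbF.
rewrite !sum_by_side //; apply: sum_side_eps_omega.
- rewrite cat_uniq uW uB andbT; apply/hasPn => T /black.
  by apply: contra => /white.
- by move=> T; rewrite memS => /and3P[].
move=> T; rewrite memS => /and3P[valid_T degsW degsB] T' perm_T'.
rewrite memS; apply/and3P; split.
- move: valid_T; rewrite /valid_rtree -/(nreal T) -/(nreal T').
  by rewrite -!size_real_verts (perm_size perm_T').
- exact: perm_trans (perm_degs_of _ perm_T') degsW.
- exact: perm_trans (perm_degs_of _ perm_T') degsB.
Qed.
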